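(* Let $d\ge1$ and $q\ge2$ even. There is no function $G:[0,\infty)\to\mathbb{R}$ satisfying $B_{d,0}(G)=b_d^{-1}$, $B_{d,i}(G)=0$ for $i\in\{2,4,\ldots,q-2\}$, $B_{d,q}(G)\neq0$, that minimizes $B_{d,q}(G)^{2(d+2)}\cdot V_{d,1}(G)^{2q}$ among all functions satisfying these moment conditions; i.e., this minimization problem has no solution.
   Context: For $G:[0,\infty)\to\mathbb{R}$: $B_{d,i}(G)=\int_0^\infty x^{d-1+i}G(x)\,dx$, $V_{d,1}(G)=\int_0^\infty x^{d-1}\{G^{(1)}(x)\}^2dx$, and $b_d=2\pi^{d/2}/\Gamma(d/2)$. *)

From Stdlib Require Import Reals Lra Lia.
From Coquelicot Require Import Coquelicot.
Open Scope R_scope.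

Definition int0inf (f : R -> R) : R :=
  RInt_gen f (at_right 0) (Rbar_locally p_infty).

Definition ex_int0inf (f : R -> R) : Prop :=
  ex_RInt_gen f (at_right 0) (Rbar_locally p_infty).

Definition Bmom (d i : nat) (G : R -> R) : R :=
  int0inf (fun x => x ^ (d - 1 + i) * G x).

Definition V1 (d : nat) (G : R -> R) : R :=
  int0inf (fun x => x ^ (d - 1) * (Derive G x) ^ 2).

(* b_d = 2 pi^{d/2} / Gamma(d/2), the surface area of the unit sphere in R^d,
   computed via b_1 = 2, b_2 = 2 pi, b_{d+2} = (2 pi / d) b_d
   (equivalent to the Gamma formula since Gamma(s+1) = s Gamma(s)). *)
Fixpoint bsurf (d : nat) : R :=
  match d with
  | O => 0 (* unused: d >= 1 *)
  | S O => 2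
  | S (S O as d1) => 2 * PI
  | S (S d' as d1) => 2 * PI / INR d' * bsurf d'
  end.

Definition admissible (d q : nat) (G : R -> R) : Prop :=
  (forall x, 0 < x -> ex_derive G x) /\
  (forall i, (i <= q)%nat -> Nat.Even i -> ex_int0inf (fun x => x ^ (d - 1 + i) * G x)) /\
  ex_int0inf (fun x => x ^ (d - 1) * (Derive G x) ^ 2) /\
  Bmom d 0 G = / bsurf d /\
  (forall i, (2 <= i <= q - 2)%nat -> Nat.Even i -> Bmom d i G = 0) /\
  Bmom d q G <> 0.

Definition objective (d q : nat) (G : R -> R) : R :=
  Bmom d q G ^ (2 * (d + 2)) * V1 d G ^ (2 * q).

(* An admissible G has a positive objective, yet admissible functions make the objective
   arbitrarily small, so no minimiser exists.

   Positivity: if V_{d,1}(G) = 0, then G is constant on (0, +oo). G' need not be integrable,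
   but on a fine uniform partition of [x, y] tagged with mean-value points, the discrete
   Cauchy-Schwarz inequality bounds (G y - G x)^2 by (y - x) times a Riemann sum of G'^2, which
   is as small as we like. The integral B_{d,q}(G) of c x^(d-1+q) then converges only if
   c = 0, contradicting B_{d,q}(G) <> 0.

   Infimum 0: orthogonalising C^1 bumps against the even monomials gives compactly supported
   C^1 functions u_0, ..., u_N (q = 2N) with B_{d,2j}(u_k) = [k = j]. For s <> 0 the function
   u_0 / b_d + s u_N is admissible with B_{d,q} = s, and its V_{d,1} stays bounded for |s| <= 1,
   so its objective is O(s^(2(d+2))). *)

From Stdlib Require Import Reals Lra Lia Arith FunctionalExtensionality ClassicalEpsilon Classical.
From Coquelicot Require Import Coquelicot.
Open Scope R_scope.

(** * Improper integrals over (0, +oo) *)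

Notation is_int0inf f l := (is_RInt_gen f (at_right 0) (Rbar_locally p_infty) l).

Lemma int0inf_correct f : ex_int0inf f -> is_int0inf f (int0inf f).
Proof. exact (RInt_gen_correct (V := R_CompleteNormedModule) f). Qed.

Lemma int0inf_unique f l : is_int0inf f l -> int0inf f = l.
Proof. exact (is_RInt_gen_unique f l). Qed.

Lemma int0inf_ext f g : (forall x, f x = g x) -> int0inf f = int0inf g.
Proof. intros Hfg. f_equal. now apply functional_extensionality. Qed.

Lemma is_int0inf_approx f l : is_int0inf f l ->
  forall eps c e, 0 < eps -> 0 < c ->
  exists a b y, 0 < a < c /\ e < b /\ is_RInt f a b y /\ Rabs (y - l) < eps.
Proof.
  intros Hl eps c e Heps Hc.
  destruct (Hl (ball l (mkposreal eps Heps))) as [Q P [dl Hdl] [M HM] HQP].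
  { now exists (mkposreal eps Heps). }
  set (a := Rmin c dl / 2).
  assert (Hcdl : 0 < Rmin c dl) by (apply Rmin_glb_lt; [lra | apply cond_pos]).
  assert (Hac : a < c) by (pose proof (Rmin_l c dl); unfold a; lra).
  assert (Qa : Q a).
  { apply Hdl; [| unfold a; lra].
    change (Rabs (a - 0) < dl). rewrite Rminus_0_r, Rabs_pos_eq by (unfold a; lra).
    pose proof (Rmin_r c dl). unfold a; lra. }
  assert (Pb : P (Rmax e M + 1)) by (apply HM; pose proof (Rmax_r e M); lra).
  destruct (HQP a _ Qa Pb) as [y [Hy Hyl]].
  exists a, (Rmax e M + 1), y. repeat split; try (unfold a; lra); auto.
  pose proof (Rmax_l e M); lra.
Qed.

Lemma is_int0inf_ge0 f l : is_int0inf f l -> (forall x, 0 < x -> 0 <= f x) -> 0 <= l.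
Proof.
  intros Hl Hf. apply Rnot_lt_le. intros Hneg.
  destruct (is_int0inf_approx f l Hl (- l) 1 1 ltac:(lra) Rlt_0_1)
    as (a & b & y & Ha & Hb & Hy & Hyl).
  assert (0 <= y) by (apply (is_RInt_ge_0 f a b); [lra | auto | intros; apply Hf; lra]).
  apply Rabs_lt_between' in Hyl. lra.
Qed.

Lemma int0inf_ge0 f : ex_int0inf f -> (forall x, 0 < x -> 0 <= f x) -> 0 <= int0inf f.
Proof. intros Hf. apply is_int0inf_ge0, int0inf_correct, Hf. Qed.

Lemma is_int0inf_plus f g lf lg : is_int0inf f lf -> is_int0inf g lg ->
  is_int0inf (fun x => f x + g x) (lf + lg).
Proof. exact (is_RInt_gen_plus f g lf lg). Qed.

Lemma int0inf_plus f g : ex_int0inf f -> ex_int0inf g ->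
  int0inf (fun x => f x + g x) = int0inf f + int0inf g.
Proof. intros Hf Hg. apply int0inf_unique, is_int0inf_plus; now apply int0inf_correct. Qed.

Lemma int0inf_scal k f : ex_int0inf f -> int0inf (fun x => k * f x) = k * int0inf f.
Proof. intros Hf. apply int0inf_unique, (is_RInt_gen_scal f k), int0inf_correct, Hf. Qed.

Lemma int0inf_le f g : ex_int0inf f -> ex_int0inf g -> (forall x, 0 < x -> f x <= g x) ->
  int0inf f <= int0inf g.
Proof.
  intros Hf Hg Hfg.
  assert (0 <= int0inf g - int0inf f); [| lra].
  apply (is_int0inf_ge0 (fun x => g x - f x)).
  - apply (is_RInt_gen_minus g f); now apply int0inf_correct.
  - intros x Hx. specialize (Hfg x Hx). lra.
Qed.

Lemma is_int0inf_sum (F : nat -> R -> R) n : (forall k, ex_int0inf (F k)) ->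
  is_int0inf (fun x => sum_f_R0 (fun k => F k x) n) (sum_f_R0 (fun k => int0inf (F k)) n).
Proof.
  intros HF. induction n as [| n IH]; simpl.
  - apply int0inf_correct, HF.
  - apply is_int0inf_plus; [exact IH | apply int0inf_correct, HF].
Qed.

Lemma is_int0inf_nonneg_zero f c e : (forall x, 0 < x -> 0 <= f x) -> is_int0inf f 0 ->
  0 < c -> c < e -> is_RInt f c e 0.
Proof.
  intros Hf Hl Hc Hce.
  assert (Hsmall : forall eps, 0 < eps -> ex_RInt f c e /\ RInt f c e < eps).
  { intros eps Heps.
    destruct (is_int0inf_approx f 0 Hl eps c e Heps Hc) as (a & b & y & Ha & Hb & Hy & Hyl).
    assert (Hab : ex_RInt f a b) by (now exists y).
    assert (Hae : ex_RInt f a e) by (apply (ex_RInt_Chasles_1 f a e b); [lra | auto]).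
    assert (Hce' : ex_RInt f c e) by (apply (ex_RInt_Chasles_2 f a c e); [lra | auto]).
    assert (Hac : ex_RInt f a c) by (apply (ex_RInt_Chasles_1 f a c e); [lra | auto]).
    assert (Heb : ex_RInt f e b) by (apply (ex_RInt_Chasles_2 f a e b); [lra | auto]).
    assert (Hsplit : y = RInt f a c + RInt f c e + RInt f e b).
    { rewrite <- (is_RInt_unique f a b y Hy), <- (RInt_Chasles f a e b),
        <- (RInt_Chasles f a c e) by auto.
      reflexivity. }
    assert (0 <= RInt f a c) by (apply RInt_ge_0; auto; [lra | intros; apply Hf; lra]).
    assert (0 <= RInt f e b) by (apply RInt_ge_0; auto; [lra | intros; apply Hf; lra]).
    apply Rabs_lt_between in Hyl. split; [auto | lra]. }
  destruct (Hsmall 1 Rlt_0_1) as [Hex _].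
  assert (Hnonneg : 0 <= RInt f c e) by (apply RInt_ge_0; auto; [lra | intros; apply Hf; lra]).
  assert (Hzero : RInt f c e = 0).
  { destruct Hnonneg as [Hpos |]; auto.
    destruct (Hsmall _ Hpos) as [_ Hlt]. lra. }
  rewrite <- Hzero. now apply (RInt_correct (V := R_CompleteNormedModule)).
Qed.

Lemma RInt_monomial K k a b : RInt (fun x => K * x ^ k) a b = K * (b ^ S k - a ^ S k) / INR (S k).
Proof.
  assert (HN : INR (S k) <> 0) by (apply not_0_INR; lia).
  apply is_RInt_unique.
  replace (K * (b ^ S k - a ^ S k) / INR (S k)) with
    (minus ((fun x => K * x ^ S k / INR (S k)) b) ((fun x => K * x ^ S k / INR (S k)) a))
    by (unfold minus, plus, opp; simpl; field; auto).
  apply (is_RInt_derive (V := R_CompleteNormedModule) (fun x => K * x ^ S k / INR (S k))).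
  - intros t _. auto_derive; [exact I |].
    change (match k with 0%nat => 1 | S _ => INR k + 1 end) with (INR (S k)). field. exact HN.
  - intros t _. apply (ex_derive_continuous (K := R_AbsRing) (V := R_NormedModule)).
    auto_derive. exact I.
Qed.

Lemma int0inf_monomial_eq0 f K k : (forall x, 0 < x -> f x = K * x ^ k) -> ex_int0inf f ->
  int0inf f = 0.
Proof.
  intros Hf Hex. pose proof (int0inf_correct f Hex) as Hl. set (l := int0inf f) in *.
  assert (HN : 0 < INR (S k)) by (apply lt_0_INR; lia).
  assert (Happrox : forall a b y, 0 < a -> a < b -> is_RInt f a b y ->
                      y = K * (b ^ S k - a ^ S k) / INR (S k)).
  { intros a b y Ha Hab Hy. rewrite <- (is_RInt_unique f a b y Hy), <- RInt_monomial.
    apply RInt_ext. intros x Hx. rewrite Rmin_left, Rmax_right in Hx by lra. apply Hf. lra. }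
  assert (HK : K = 0).
  { apply NNPP. intros HK. apply Rabs_pos_lt in HK.
    set (E := 1 + (Rabs l + 1) * INR (S k) / Rabs K).
    destruct (is_int0inf_approx f l Hl 1 1 E Rlt_0_1 Rlt_0_1) as (a & b & y & Ha & Hb & Hy & Hyl).
    assert (HE : 1 < E).
    { pose proof (Rabs_pos l).
      assert (0 < (Rabs l + 1) * INR (S k) / Rabs K) by (apply Rdiv_lt_0_compat; nra).
      unfold E. lra. }
    assert (Ha1 : a ^ S k <= 1) by (rewrite <- (pow1 (S k)); apply pow_incr; lra).
    assert (Hbb : b <= b ^ S k) by (rewrite <- (pow_1 b) at 1; apply Rle_pow; [lra | lia]).
    rewrite (Happrox a b y) in Hyl by (auto; lra).
    pose proof (Rabs_triang_inv (K * (b ^ S k - a ^ S k) / INR (S k)) l) as Htri.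
    unfold Rdiv in Htri. rewrite !Rabs_mult, Rabs_inv, (Rabs_pos_eq (INR (S k))),
      (Rabs_pos_eq (b ^ S k - a ^ S k)) in Htri by lra.
    assert (Hlt : Rabs K * (b ^ S k - a ^ S k) < (Rabs l + 1) * INR (S k)).
    { unfold Rdiv in Hyl.
      apply (Rmult_lt_reg_r (/ INR (S k))); [now apply Rinv_0_lt_compat |].
      replace ((Rabs l + 1) * INR (S k) * / INR (S k)) with (Rabs l + 1) by (field; lra).
      lra. }
    assert (Hgt : (Rabs l + 1) * INR (S k) < Rabs K * (b ^ S k - a ^ S k)).
    { replace ((Rabs l + 1) * INR (S k)) with (Rabs K * (E - 1)) by (unfold E; field; lra).
      apply Rmult_lt_compat_l; lra. }
    lra. }
  apply cond_eq. intros eps Heps.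
  destruct (is_int0inf_approx f l Hl eps 1 1 Heps Rlt_0_1) as (a & b & y & Ha & Hb & Hy & Hyl).
  rewrite (Happrox a b y), HK in Hyl by (auto; lra).
  replace (0 * (b ^ S k - a ^ S k) / INR (S k)) with 0 in Hyl by (field; lra).
  now rewrite Rabs_minus_sym.
Qed.

(** * Functions of zero energy are constant *)

(* A mean-value point of [G] on [[x, y]] when there is one, and some point of [[x, y]]
   otherwise, so that it is always a legal tag. *)
Definition mvt_tag (G : R -> R) (x y : R) : R :=
  epsilon (inhabits 0) (fun c => x <= c <= y /\
    ((exists c', x <= c' <= y /\ G y - G x = Derive G c' * (y - x)) ->
     G y - G x = Derive G c * (y - x))).

Lemma mvt_tag_spec G x y : x <= y -> x <= mvt_tag G x y <= y /\
  ((exists c, x <= c <= y /\ G y - G x = Derive G c * (y - x)) ->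
   G y - G x = Derive G (mvt_tag G x y) * (y - x)).
Proof.
  intros Hxy. unfold mvt_tag. apply epsilon_spec.
  destruct (classic (exists c, x <= c <= y /\ G y - G x = Derive G c * (y - x)))
    as [[c Hc] | Hnone].
  - exists c. split; [apply Hc | intros _; apply Hc].
  - exists x. split; [lra | intros Hsome; contradiction].
Qed.

Lemma mvt_tag_eq G x y : 0 < x -> x <= y -> (forall t, 0 < t -> ex_derive G t) ->
  G y - G x = Derive G (mvt_tag G x y) * (y - x).
Proof.
  intros Hx Hxy HG. apply (mvt_tag_spec G x y Hxy).
  destruct Hxy as [Hlt | <-]; [| exists x; split; [lra | ring]].
  destruct (MVT_gen G x y (Derive G)) as [c Hc];
    rewrite Rmin_left, Rmax_right in * by lra.
  - intros t Ht. apply Derive_correct, HG. lra.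
  - intros t Ht. apply continuity_pt_filterlim,
      (ex_derive_continuous (K := R_AbsRing) (V := R_NormedModule)), HG. lra.
  - now exists c.
Qed.

Lemma cauchy_schwarz_step A L S g dl : 0 <= L -> 0 <= S -> 0 <= dl -> A ^ 2 <= L * S ->
  (A + g * dl) ^ 2 <= (L + dl) * (dl * g ^ 2 + S).
Proof.
  intros HL HS Hd H.
  assert (2 * A * g <= L * g ^ 2 + S).
  { destruct HL as [HL | <-].
    - apply (Rmult_le_reg_l L); [auto |]. pose proof (pow2_ge_0 (L * g - A)). nra.
    - assert (A = 0) by nra. subst. pose proof (pow2_ge_0 g). nra. }
  nra.
Qed.

Lemma sorted_last_ge x s : sorted Rle (x :: s) -> x <= seq.last x s.
Proof.
  revert x. induction s as [| y s IH]; intros x Hs; simpl; [lra |].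
  destruct Hs as [Hxy Hs]. specialize (IH y Hs). lra.
Qed.

Lemma sq_increment_le_Riemann_sum G x s : 0 < x -> (forall t, 0 < t -> ex_derive G t) ->
  sorted Rle (x :: s) ->
  let S := Riemann_sum (fun t => Derive G t ^ 2) (SF_seq_f2 (mvt_tag G) (x :: s)) in
  0 <= S /\ (G (seq.last x s) - G x) ^ 2 <= (seq.last x s - x) * S.
Proof.
  intros Hx HG. revert x Hx. induction s as [| y s IH]; intros x Hx Hs S.
  - assert (S = 0) as -> by reflexivity. simpl. split; [lra | right; ring].
  - destruct Hs as [Hxy Hs].
    destruct (IH y ltac:(lra) Hs) as [IH0 IH1].
    unfold S. rewrite SF_cons_f2 by (simpl; lia). rewrite Riemann_sum_cons.
    simpl seq.head. simpl SF_h. change (seq.last x (y :: s)) with (seq.last y s).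
    unfold plus, scal; simpl; unfold mult; simpl.
    set (S' := Riemann_sum _ (SF_seq_f2 (mvt_tag G) (y :: s))) in *.
    pose proof (sorted_last_ge y s Hs). set (l := seq.last y s) in *.
    pose proof (mvt_tag_eq G x y Hx Hxy HG) as Hmvt.
    set (g := Derive G (mvt_tag G x y)) in *.
    split; [pose proof (pow2_ge_0 g); nra |].
    replace (G l - G x) with ((G l - G y) + g * (y - x)) by lra.
    replace (l - x) with ((l - y) + (y - x)) by ring.
    apply (cauchy_schwarz_step (G l - G y) (l - y) S' g (y - x)); lra.
Qed.

Lemma sq_increment_le_Riemann_sum_unif G c e n : 0 < c -> c <= e ->
  (forall t, 0 < t -> ex_derive G t) ->
  (G e - G c) ^ 2 <=
    (e - c) * Riemann_sum (fun t => Derive G t ^ 2) (SF_seq_f2 (mvt_tag G) (unif_part c e n)).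
Proof.
  intros Hc Hce HG.
  pose proof (head_unif_part 0 c e n) as Hhead. pose proof (last_unif_part 0 c e n) as Hlast.
  pose proof (unif_part_sort c e n Hce) as Hsorted.
  destruct (unif_part c e n) as [| x s]; [simpl in Hhead; lra |].
  simpl in Hhead, Hlast. subst x.
  rewrite <- Hlast at 1 2. now apply sq_increment_le_Riemann_sum.
Qed.

Lemma is_RInt_Riemann_sum_unif f tag c e I eps :
  (forall x y, x <= y -> x <= tag x y <= y) -> c < e -> 0 < eps -> is_RInt f c e I ->
  exists n, Rabs (Riemann_sum f (SF_seq_f2 tag (unif_part c e n)) - I) < eps.
Proof.
  intros Htag Hce Heps HI.
  destruct (HI (ball I (mkposreal eps Heps))) as [step Hstep]; [now exists (mkposreal eps Heps) |].
  destruct (seq_step_unif_part_ex c e step) as [n Hn]. exists n.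
  destruct (Riemann_fine_unif_part tag c e n) as (_ & Hptd & Hh & Hlast); [exact Htag | lra |].
  assert (Hball : ball I eps
    (scal (sign (e - c)) (Riemann_sum f (SF_seq_f2 tag (unif_part c e n))))).
  { apply Hstep.
    - rewrite SF_lx_f2; [exact Hn |]. unfold unif_part. rewrite seq.size_mkseq. lia.
    - rewrite Rmin_left, Rmax_right by lra. now split. }
  rewrite sign_eq_1 in Hball by lra.
  change (Rabs (1 * Riemann_sum f (SF_seq_f2 tag (unif_part c e n)) - I) < eps) in Hball.
  now rewrite Rmult_1_l in Hball.
Qed.

Lemma sq_increment_le_weighted_energy G k c e I : 0 < c -> c <= e ->
  (forall t, 0 < t -> ex_derive G t) ->
  is_RInt (fun t => t ^ k * Derive G t ^ 2) c e I ->
  c ^ k * (G e - G c) ^ 2 <= (e - c) * I.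
Proof.
  intros Hc Hce HG HI.
  destruct Hce as [Hce | <-]; [| rewrite Rminus_diag, Rminus_diag; right; ring].
  apply Rle_plus_epsilon. intros eps Heps.
  set (dl := eps / (e - c)).
  assert (Hdl : 0 < dl) by (apply Rdiv_lt_0_compat; lra).
  assert (Htag : forall x y, x <= y -> x <= mvt_tag G x y <= y) by (intros; now apply mvt_tag_spec).
  destruct (is_RInt_Riemann_sum_unif _ (mvt_tag G) c e I dl Htag Hce Hdl HI) as [n Hn].
  set (ptd := SF_seq_f2 (mvt_tag G) (unif_part c e n)) in Hn.
  change (Rabs (Riemann_sum (fun t => t ^ k * Derive G t ^ 2) ptd - I) < dl) in Hn.
  destruct (Riemann_fine_unif_part (mvt_tag G) c e n) as (_ & Hptd & Hh & Hlast);
    [exact Htag | lra |].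
  fold ptd in Hptd, Hh, Hlast.
  assert (Hcompare : c ^ k * Riemann_sum (fun t => Derive G t ^ 2) ptd <=
                     Riemann_sum (fun t => t ^ k * Derive G t ^ 2) ptd).
  { rewrite <- (Riemann_sum_scal (c ^ k) (fun t => Derive G t ^ 2) ptd
      : Riemann_sum (fun t => c ^ k * Derive G t ^ 2) ptd = c ^ k * Riemann_sum _ ptd).
    apply Riemann_sum_le; [exact Hptd |].
    intros t Ht. rewrite Hlast, Hh in Ht.
    apply Rmult_le_compat_r; [apply pow2_ge_0 | apply pow_incr; lra]. }
  pose proof (sq_increment_le_Riemann_sum_unif G c e n Hc ltac:(lra) HG) as Hmvt. fold ptd in Hmvt.
  assert (Hck : 0 < c ^ k) by (apply pow_lt, Hc).
  set (S := Riemann_sum (fun t => Derive G t ^ 2) ptd) in *.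
  set (Sw := Riemann_sum (fun t => t ^ k * Derive G t ^ 2) ptd) in *.
  apply Rabs_lt_between in Hn.
  assert (c ^ k * (G e - G c) ^ 2 <= c ^ k * ((e - c) * S)) by (apply Rmult_le_compat_l; lra).
  assert ((e - c) * (c ^ k * S) <= (e - c) * (I + dl)) by (apply Rmult_le_compat_l; lra).
  replace eps with ((e - c) * dl) by (unfold dl; field; lra).
  nra.
Qed.

Lemma weighted_energy_eq0_const G k : (forall t, 0 < t -> ex_derive G t) ->
  ex_int0inf (fun t => t ^ k * Derive G t ^ 2) -> int0inf (fun t => t ^ k * Derive G t ^ 2) = 0 ->
  forall x y, 0 < x -> x < y -> G x = G y.
Proof.
  intros HG Hex Hzero x y Hx Hxy.
  assert (HI : is_RInt (fun t => t ^ k * Derive G t ^ 2) x y 0).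
  { apply is_int0inf_nonneg_zero; auto.
    - intros t Ht. apply Rmult_le_pos; [apply pow_le; lra | apply pow2_ge_0].
    - pose proof (int0inf_correct _ Hex) as Hl. now rewrite Hzero in Hl. }
  pose proof (sq_increment_le_weighted_energy G k x y 0 Hx ltac:(lra) HG HI) as Hbound.
  assert (0 < x ^ k) by (apply pow_lt, Hx).
  assert ((G y - G x) ^ 2 <= 0) by nra.
  apply Rle_antisym; nra.
Qed.

Lemma V1_neq0 d q G : Nat.Even q -> admissible d q G -> V1 d G <> 0.
Proof.
  intros Hq (HG & Hmom & HexV & _ & _ & HBq) HV.
  assert (Hconst : forall x, 0 < x -> G x = G 1).
  { intros x Hx. destruct (Rtotal_order x 1) as [Hlt | [-> | Hgt]]; [| reflexivity |].
    - now apply (weighted_energy_eq0_const G (d - 1)).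
    - symmetry. apply (weighted_energy_eq0_const G (d - 1)); auto; lra. }
  apply HBq, (int0inf_monomial_eq0 _ (G 1) (d - 1 + q)).
  - intros x Hx. rewrite Hconst by exact Hx. ring.
  - now apply Hmom.
Qed.

(** * Continuous functions with compact support in (0, +oo) *)

Definition supported_in (a b : R) (f : R -> R) : Prop := forall x, x < a \/ b < x -> f x = 0.

Lemma supported_in_widen a b a' b' f : a' <= a -> b <= b' -> supported_in a b f ->
  supported_in a' b' f.
Proof. intros Ha Hb Hf x Hx. apply Hf. lra. Qed.

Lemma is_RInt_supported_in f a b a' b' : (forall x, continuous f x) -> supported_in a b f ->
  a' <= a -> a <= b -> b <= b' -> is_RInt f a' b' (RInt f a b).
Proof.
  intros Hc Hf Ha Hab Hb.
  assert (Hex : forall u v, ex_RInt f u v)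
    by (intros; apply (ex_RInt_continuous (V := R_CompleteNormedModule)); auto).
  assert (Hzero : forall u v, u <= v -> (forall x, u < x < v -> f x = 0) -> RInt f u v = 0).
  { intros u v Huv Hz. rewrite (RInt_ext f (fun _ => 0)), RInt_const.
    - apply Rmult_0_r.
    - intros x Hx. rewrite Rmin_left, Rmax_right in Hx by lra. now apply Hz. }
  replace (RInt f a b) with (RInt f a' b').
  - now apply (RInt_correct (V := R_CompleteNormedModule)).
  - rewrite <- (RInt_Chasles f a' a b'), <- (RInt_Chasles f a b b') by auto.
    rewrite (Hzero a' a), (Hzero b b') by (auto; intros; apply Hf; lra).
    unfold plus; simpl. ring.
Qed.

Lemma is_int0inf_supported_in f a b : (forall x, continuous f x) -> supported_in a b f ->
  0 < a -> a <= b -> is_int0inf f (RInt f a b).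
Proof.
  intros Hc Hf Ha Hab P [eps HP].
  apply Filter_prod with (fun x => 0 < x < a) (fun y => b < y).
  - exists (mkposreal a Ha). intros y Hy Hy0. split; [exact Hy0 |].
    change (Rabs (y - 0) < a) in Hy. apply Rabs_lt_between in Hy. lra.
  - now exists b.
  - intros x y Hx Hy. exists (RInt f a b). split.
    + simpl. apply is_RInt_supported_in; auto; lra.
    + apply HP, ball_center.
Qed.

Definition csupp (f : R -> R) : Prop :=
  (forall x, continuous f x) /\ exists a b, 0 < a <= b /\ supported_in a b f.

Lemma ex_int0inf_csupp f : csupp f -> ex_int0inf f.
Proof.
  intros [Hc (a & b & Hab & Hf)]. exists (RInt f a b).
  apply is_int0inf_supported_in; auto; lra.
Qed.

Lemma int0inf_gt0_supported_in f a b : (forall x, continuous f x) -> supported_in a b f ->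
  0 < a -> a < b -> (forall x, a < x < b -> 0 < f x) -> 0 < int0inf f.
Proof.
  intros Hc Hf Ha Hab Hpos.
  rewrite (int0inf_unique f (RInt f a b)) by (apply is_int0inf_supported_in; auto; lra).
  apply RInt_gt_0; auto.
Qed.

Lemma csupp_ext f g : (forall x, f x = g x) -> csupp f -> csupp g.
Proof. intros Hfg Hf. replace g with f; [exact Hf |]. now apply functional_extensionality. Qed.

Lemma csupp_plus f g : csupp f -> csupp g -> csupp (fun x => f x + g x).
Proof.
  intros [Hcf (a1 & b1 & Hab1 & Hf)] [Hcg (a2 & b2 & Hab2 & Hg)]. split.
  - intros x. now apply (continuous_plus f g).
  - exists (Rmin a1 a2), (Rmax b1 b2).
    pose proof (Rmin_l a1 a2). pose proof (Rmin_r a1 a2).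
    pose proof (Rmax_l b1 b2). pose proof (Rmax_r b1 b2).
    split; [split; [apply Rmin_glb_lt |]; lra |].
    intros x Hx.
    rewrite (supported_in_widen a1 b1 (Rmin a1 a2) (Rmax b1 b2) f),
      (supported_in_widen a2 b2 (Rmin a1 a2) (Rmax b1 b2) g); auto. ring.
Qed.

Lemma csupp_mul g f : (forall x, continuous g x) -> csupp f -> csupp (fun x => g x * f x).
Proof.
  intros Hg [Hcf (a & b & Hab & Hf)]. split.
  - intros x. now apply (continuous_mult g f).
  - exists a, b. split; [exact Hab |]. intros x Hx. rewrite Hf by exact Hx. ring.
Qed.

Lemma csupp_scal k f : csupp f -> csupp (fun x => k * f x).
Proof. apply (csupp_mul (fun _ => k)). intros x. apply continuous_const. Qed.

Lemma continuous_pow k x : continuous (fun t => t ^ k) x.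
Proof.
  apply (ex_derive_continuous (K := R_AbsRing) (V := R_NormedModule) (fun t => t ^ k)).
  auto_derive. exact I.
Qed.

Lemma csupp_pow k f : csupp f -> csupp (fun x => x ^ k * f x).
Proof. apply (csupp_mul (fun x => x ^ k)), continuous_pow. Qed.

Lemma csupp_sq f : csupp f -> csupp (fun x => f x ^ 2).
Proof.
  intros Hf. apply (csupp_ext (fun x => f x * f x)); [intros; ring |].
  apply csupp_mul; [apply Hf | exact Hf].
Qed.

Lemma csupp_sum (F : nat -> R -> R) n : (forall k, csupp (F k)) ->
  csupp (fun x => sum_f_R0 (fun k => F k x) n).
Proof.
  intros HF. induction n as [| n IH]; simpl; [apply HF |].
  apply (csupp_plus (fun x => sum_f_R0 (fun k => F k x) n)); auto.
Qed.

(** * C^1 bumps *)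

(* [psi t = 2 max(t, 0)^2]: a C^1 function vanishing exactly on (-oo, 0]. *)
Definition psi (t : R) : R := t * (t + Rabs t).
Definition dpsi (t : R) : R := 2 * (t + Rabs t).

Lemma psi_nonpos t : t <= 0 -> psi t = 0 /\ dpsi t = 0.
Proof. intros Ht. unfold psi, dpsi. rewrite Rabs_left1 by exact Ht. split; ring. Qed.

Lemma psi_gt0 t : 0 < t -> 0 < psi t.
Proof. intros Ht. unfold psi. rewrite Rabs_pos_eq by lra. nra. Qed.

Lemma is_derive_psi t : is_derive psi t (dpsi t).
Proof.
  destruct (Rtotal_order t 0) as [Hneg | [-> | Hpos]].
  - apply (is_derive_ext_loc (fun _ => 0)).
    + exists (mkposreal (- t) ltac:(lra)). intros u Hu.
      change (Rabs (u - t) < - t) in Hu. apply Rabs_lt_between in Hu.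
      symmetry. apply psi_nonpos. lra.
    + replace (dpsi t) with 0 by (symmetry; apply psi_nonpos; lra). auto_derive; auto.
  - apply is_derive_Reals. intros eps Heps.
    exists (mkposreal (eps / 2) ltac:(lra)). intros h Hh0 Hh. simpl in Hh.
    unfold psi, dpsi. rewrite Rplus_0_l, Rabs_R0.
    replace ((h * (h + Rabs h) - 0 * (0 + 0)) / h - 2 * (0 + 0)) with (h + Rabs h)
      by (field; exact Hh0).
    apply Rle_lt_trans with (Rabs h + Rabs (Rabs h)); [apply Rabs_triang |].
    rewrite Rabs_Rabsolu. lra.
  - apply (is_derive_ext_loc (fun u => 2 * u ^ 2)).
    + exists (mkposreal t Hpos). intros u Hu.
      change (Rabs (u - t) < t) in Hu. apply Rabs_lt_between in Hu.
      unfold psi. rewrite Rabs_pos_eq by lra. simpl. ring.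
    + unfold dpsi. rewrite Rabs_pos_eq by lra. auto_derive; [exact I | simpl; ring].
Qed.

Lemma continuous_dpsi t : continuous dpsi t.
Proof.
  apply (continuous_mult (fun _ => 2) (fun t => t + Rabs t)); [apply continuous_const |].
  apply (continuous_plus (fun t => t) Rabs); [apply continuous_id | apply continuous_Rabs].
Qed.

Lemma continuous_psi t : continuous psi t.
Proof.
  apply (ex_derive_continuous (K := R_AbsRing) (V := R_NormedModule)).
  exists (dpsi t). apply is_derive_psi.
Qed.

Lemma continuous_comp_derivable (g h : R -> R) x : ex_derive h x -> continuous g (h x) ->
  continuous (fun y => g (h y)) x.
Proof.
  intros Hh Hg. apply continuous_comp; [| exact Hg].
  now apply (ex_derive_continuous (K := R_AbsRing) (V := R_NormedModule)).
Qed.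

Definition bump (a b x : R) : R := psi (x - a) * psi (b - x).
Definition dbump (a b x : R) : R := dpsi (x - a) * psi (b - x) - psi (x - a) * dpsi (b - x).

Lemma is_derive_bump a b x : is_derive (bump a b) x (dbump a b x).
Proof.
  assert (Hl : is_derive (fun x => psi (x - a)) x (dpsi (x - a))).
  { rewrite <- (Rmult_1_l (dpsi (x - a))).
    apply (is_derive_comp psi (fun x => x - a)); [apply is_derive_psi | auto_derive; auto]. }
  assert (Hr : is_derive (fun x => psi (b - x)) x (- dpsi (b - x))).
  { replace (- dpsi (b - x)) with (-1 * dpsi (b - x)) by ring.
    apply (is_derive_comp psi (fun x => b - x));
      [apply is_derive_psi | auto_derive; [exact I | ring]]. }
  unfold bump, dbump.
  replace (dpsi (x - a) * psi (b - x) - psi (x - a) * dpsi (b - x))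
    with (dpsi (x - a) * psi (b - x) + psi (x - a) * - dpsi (b - x)) by ring.
  exact (is_derive_mult _ _ x _ _ Hl Hr (fun n m => Rmult_comm n m)).
Qed.

Lemma bump_gt0 a b x : a < x < b -> 0 < bump a b x.
Proof. intros Hx. apply Rmult_lt_0_compat; apply psi_gt0; lra. Qed.

Lemma supported_in_bump a b : supported_in a b (bump a b).
Proof.
  intros x [Hx | Hx]; unfold bump.
  - rewrite (proj1 (psi_nonpos (x - a) ltac:(lra))). ring.
  - rewrite (proj1 (psi_nonpos (b - x) ltac:(lra))). ring.
Qed.

Lemma supported_in_dbump a b : supported_in a b (dbump a b).
Proof.
  intros x [Hx | Hx]; unfold dbump.
  - destruct (psi_nonpos (x - a) ltac:(lra)) as [-> ->]. ring.
  - destruct (psi_nonpos (b - x) ltac:(lra)) as [-> ->]. ring.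
Qed.

Definition c1_csupp (h : R -> R) : Prop :=
  (forall x, ex_derive h x) /\ csupp h /\ csupp (Derive h).

Lemma c1_csupp_bump a b : 0 < a -> a <= b -> c1_csupp (bump a b).
Proof.
  intros Ha Hab.
  assert (HD : Derive (bump a b) = dbump a b).
  { apply functional_extensionality. intros x. apply is_derive_unique, is_derive_bump. }
  split; [| split].
  - intros x. exists (dbump a b x). apply is_derive_bump.
  - split; [| exists a, b; split; [lra | apply supported_in_bump]].
    intros x. apply (ex_derive_continuous (K := R_AbsRing) (V := R_NormedModule)).
    exists (dbump a b x). apply is_derive_bump.
  - rewrite HD. split; [| exists a, b; split; [lra | apply supported_in_dbump]].
    intros x. unfold dbump.
    apply (continuous_minus (fun x => dpsi (x - a) * psi (b - x))
                            (fun x => psi (x - a) * dpsi (b - x)));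
      [apply (continuous_mult (fun x => dpsi (x - a)) (fun x => psi (b - x)))
      | apply (continuous_mult (fun x => psi (x - a)) (fun x => dpsi (b - x)))];
      apply continuous_comp_derivable;
      solve [auto_derive; auto | apply continuous_psi | apply continuous_dpsi].
Qed.

Lemma c1_csupp_csupp h : c1_csupp h -> csupp h.
Proof. intros (_ & Hh & _). exact Hh. Qed.

Lemma c1_csupp_plus f g : c1_csupp f -> c1_csupp g -> c1_csupp (fun x => f x + g x).
Proof.
  intros (Hf1 & Hf2 & Hf3) (Hg1 & Hg2 & Hg3). split; [| split].
  - intros x. now apply (ex_derive_plus f g).
  - now apply csupp_plus.
  - apply (csupp_ext (fun x => Derive f x + Derive g x)); [| now apply csupp_plus].
    intros x. symmetry. now apply (Derive_plus f g).
Qed.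

Lemma c1_csupp_scal k f : c1_csupp f -> c1_csupp (fun x => k * f x).
Proof.
  intros (Hf1 & Hf2 & Hf3). split; [| split].
  - intros x. now apply ex_derive_scal.
  - now apply csupp_scal.
  - apply (csupp_ext (fun x => k * Derive f x)); [| now apply csupp_scal].
    intros x. symmetry. apply Derive_scal.
Qed.

Lemma c1_csupp_sum (F : nat -> R -> R) n : (forall k, c1_csupp (F k)) ->
  c1_csupp (fun x => sum_f_R0 (fun k => F k x) n).
Proof.
  intros HF. induction n as [| n IH]; simpl; [apply HF |].
  apply (c1_csupp_plus (fun x => sum_f_R0 (fun k => F k x) n)); auto.
Qed.

(** * Prescribing the even moments *)

Lemma Bmom_plus d i f g : csupp f -> csupp g ->
  Bmom d i (fun x => f x + g x) = Bmom d i f + Bmom d i g.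
Proof.
  intros Hf Hg. unfold Bmom.
  rewrite (int0inf_ext _ (fun x => x ^ (d - 1 + i) * f x + x ^ (d - 1 + i) * g x))
    by (intros; ring).
  apply int0inf_plus; now apply ex_int0inf_csupp, csupp_pow.
Qed.

Lemma Bmom_scal d i k f : csupp f -> Bmom d i (fun x => k * f x) = k * Bmom d i f.
Proof.
  intros Hf. unfold Bmom.
  rewrite (int0inf_ext _ (fun x => k * (x ^ (d - 1 + i) * f x))) by (intros; ring).
  now apply int0inf_scal, ex_int0inf_csupp, csupp_pow.
Qed.

Lemma Bmom_sum d i (F : nat -> R -> R) n : (forall k, csupp (F k)) ->
  Bmom d i (fun x => sum_f_R0 (fun k => F k x) n) = sum_f_R0 (fun k => Bmom d i (F k)) n.
Proof.
  intros HF. unfold Bmom.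
  rewrite (int0inf_ext _ (fun x => sum_f_R0 (fun k => x ^ (d - 1 + i) * F k x) n)).
  - apply int0inf_unique, is_int0inf_sum. intros k. now apply ex_int0inf_csupp, csupp_pow.
  - intros x. rewrite scal_sum. apply sum_eq. intros k _. ring.
Qed.

Definition kronecker (k j : nat) : R := if Nat.eq_dec k j then 1 else 0.

Lemma sum_kronecker (t : nat -> R) N j : (j <= N)%nat ->
  sum_f_R0 (fun k => t k * kronecker k j) N = t j.
Proof.
  intros Hj. induction N as [| N IH]; simpl.
  - assert (j = 0%nat) as -> by lia. unfold kronecker. simpl. ring.
  - destruct (Nat.eq_dec j (S N)) as [-> | Hne].
    + rewrite sum_eq_R0; [unfold kronecker; destruct (Nat.eq_dec (S N) (S N)); [ring | lia] |].
      intros k Hk. unfold kronecker. destruct (Nat.eq_dec k (S N)); [lia | ring].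
    + rewrite IH by lia. unfold kronecker. destruct (Nat.eq_dec (S N) j); [lia | ring].
Qed.

Lemma pow_dominates_poly n (c : nat -> R) : exists Y, 1 <= Y /\
  forall y, Y <= y -> sum_f_R0 (fun k => c k * y ^ k) n < y ^ S n.
Proof.
  set (C := sum_f_R0 (fun k => Rabs (c k)) n).
  assert (HC : 0 <= C) by (apply cond_pos_sum; intros; apply Rabs_pos).
  exists (1 + C). split; [lra |]. intros y Hy.
  assert (Hyn : 0 < y ^ n) by (apply pow_lt; lra).
  assert (Hsum : sum_f_R0 (fun k => c k * y ^ k) n <= C * y ^ n).
  { apply Rle_trans with (1 := Rle_abs _), Rle_trans with (1 := sum_f_R0_triangle _ n).
    unfold C. rewrite Rmult_comm, scal_sum. apply sum_Rle. intros k Hk.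
    rewrite Rabs_mult, (Rabs_pos_eq (y ^ k)) by (apply pow_le; lra).
    apply Rmult_le_compat_l; [apply Rabs_pos | apply Rle_pow; [lra | lia]]. }
  simpl. nra.
Qed.

Lemma Bmom_even d k f : Bmom d (2 * k) f = Bmom d 0 (fun x => (x ^ 2) ^ k * f x).
Proof. apply int0inf_ext. intros x. rewrite Nat.add_0_r, pow_add, pow_mult. ring. Qed.

Lemma csupp_pow_even k f : csupp f -> csupp (fun x => (x ^ 2) ^ k * f x).
Proof.
  intros Hf. apply (csupp_ext (fun x => x ^ (2 * k) * f x)); [intros; now rewrite pow_mult |].
  now apply csupp_pow.
Qed.

Lemma Bmom_gt0_supported_in d i f a b : csupp f -> supported_in a b f ->
  0 < a -> a < b -> (forall x, a < x < b -> 0 < f x) -> 0 < Bmom d i f.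
Proof.
  intros [Hc _] Hf Ha Hab Hpos. apply (int0inf_gt0_supported_in _ a b); auto.
  - intros x. apply (continuous_mult (fun x => x ^ (d - 1 + i)) f); [apply continuous_pow | auto].
  - intros x Hx. rewrite Hf by exact Hx. ring.
  - intros x Hx. apply Rmult_lt_0_compat; [apply pow_lt; lra | auto].
Qed.

Lemma Bmom_even_poly_gt0 d n (c : nat -> R) f a b : csupp f -> supported_in a b f ->
  0 < a -> a < b ->
  (forall x, a < x < b -> 0 < f x * ((x ^ 2) ^ S n - sum_f_R0 (fun k => c k * (x ^ 2) ^ k) n)) ->
  0 < Bmom d (2 * S n) f - sum_f_R0 (fun k => c k * Bmom d (2 * k) f) n.
Proof.
  intros Hf Hsupp Ha Hab Hpos.
  set (h := fun x => (x ^ 2) ^ S n * f x + sum_f_R0 (fun k => - c k * ((x ^ 2) ^ k * f x)) n).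
  assert (Hh_eq : forall x, h x = f x * ((x ^ 2) ^ S n - sum_f_R0 (fun k => c k * (x ^ 2) ^ k) n)).
  { intros x. unfold h. rewrite (sum_eq _ (fun k => c k * (x ^ 2) ^ k * - f x)) by (intros; ring).
    rewrite <- scal_sum. ring. }
  assert (Hcs : forall k, csupp (fun x => - c k * ((x ^ 2) ^ k * f x)))
    by (intros; now apply csupp_scal, csupp_pow_even).
  replace (Bmom d (2 * S n) f - sum_f_R0 (fun k => c k * Bmom d (2 * k) f) n) with (Bmom d 0 h).
  - apply (Bmom_gt0_supported_in d 0 h a b); auto.
    + apply csupp_plus; [now apply csupp_pow_even | now apply csupp_sum].
    + intros x Hx. rewrite Hh_eq, (Hsupp x Hx). ring.
    + intros x Hx. rewrite Hh_eq. now apply Hpos.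
  - unfold h. rewrite Bmom_plus, Bmom_sum, Bmom_even by auto using csupp_pow_even, csupp_sum.
    rewrite (sum_eq _ (fun k => c k * Bmom d (2 * k) f * -1)).
    + rewrite <- scal_sum. ring.
    + intros k _. rewrite Bmom_scal, <- Bmom_even by now apply csupp_pow_even. ring.
Qed.

Lemma moment_annihilator d N (u : nat -> R -> R) : (forall k, c1_csupp (u k)) ->
  (forall k j, (k <= N)%nat -> (j <= N)%nat -> Bmom d (2 * j) (u k) = kronecker k j) ->
  exists w, c1_csupp w /\ (forall j, (j <= N)%nat -> Bmom d (2 * j) w = 0) /\
    Bmom d (2 * S N) w = 1.
Proof.
  intros Hu Hdual.
  assert (Hcu : forall k, csupp (u k)) by (intros; now apply c1_csupp_csupp).
  set (c := fun k => Bmom d (2 * S N) (u k)).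
  destruct (pow_dominates_poly N c) as [Y [HY1 HY]].
  set (b := bump Y (Y + 1)).
  assert (Hb : c1_csupp b) by (apply c1_csupp_bump; lra).
  assert (Hcb : csupp b) by now apply c1_csupp_csupp.
  (* [w] is [b] minus its projection on the dual family, so only its top moment survives; it
     is positive because [b] sits where [x^(2(N+1))] dominates [sum c_k x^(2k)]. *)
  set (w := fun x => b x + sum_f_R0 (fun k => - Bmom d (2 * k) b * u k x) N).
  assert (Hw : c1_csupp w).
  { apply c1_csupp_plus; [exact Hb |]. apply c1_csupp_sum. intros k. now apply c1_csupp_scal. }
  assert (Hmom : forall j, Bmom d (2 * j) w =
    Bmom d (2 * j) b + sum_f_R0 (fun k => - Bmom d (2 * k) b * Bmom d (2 * j) (u k)) N).
  { intros j. unfold w.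
    rewrite Bmom_plus, Bmom_sum by (auto; try apply csupp_sum; intros; now apply csupp_scal).
    f_equal. apply sum_eq. intros k _. now apply Bmom_scal. }
  assert (Hpos : 0 < Bmom d (2 * S N) w).
  { rewrite Hmom, (sum_eq _ (fun k => c k * Bmom d (2 * k) b * -1)) by (intros; unfold c; ring).
    rewrite <- scal_sum.
    enough (0 < Bmom d (2 * S N) b - sum_f_R0 (fun k => c k * Bmom d (2 * k) b) N) by lra.
    apply (Bmom_even_poly_gt0 d N c b Y (Y + 1)); auto using supported_in_bump; try lra.
    intros x Hx. apply Rmult_lt_0_compat; [now apply bump_gt0 |].
    apply Rlt_0_minus, HY. simpl. nra. }
  exists (fun x => / Bmom d (2 * S N) w * w x). split; [| split].
  - now apply c1_csupp_scal.
  - intros j Hj. rewrite Bmom_scal, (Hmom j) by now apply c1_csupp_csupp.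
    rewrite (sum_eq _ (fun k => - Bmom d (2 * k) b * kronecker k j))
      by (intros k Hk; cbv beta; now rewrite Hdual).
    rewrite sum_kronecker by exact Hj. ring.
  - rewrite Bmom_scal by now apply c1_csupp_csupp. field. lra.
Qed.

Lemma moment_dual_basis d N : exists u : nat -> R -> R, (forall k, c1_csupp (u k)) /\
  forall k j, (k <= N)%nat -> (j <= N)%nat -> Bmom d (2 * j) (u k) = kronecker k j.
Proof.
  induction N as [| N [u [Hu Hdual]]].
  - set (b := bump 1 2).
    assert (Hb : c1_csupp b) by (apply c1_csupp_bump; lra).
    assert (Hpos : 0 < Bmom d (2 * 0) b).
    { apply (Bmom_gt0_supported_in d _ b 1 2); try lra.
      - now apply c1_csupp_csupp.
      - apply supported_in_bump.
      - apply bump_gt0. }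
    exists (fun _ x => / Bmom d (2 * 0) b * b x). split; [intros; now apply c1_csupp_scal |].
    intros k j Hk Hj. assert (k = 0%nat) as -> by lia. assert (j = 0%nat) as -> by lia.
    rewrite Bmom_scal by now apply c1_csupp_csupp.
    unfold kronecker. destruct (Nat.eq_dec 0 0); [field; lra | lia].
  - destruct (moment_annihilator d N u Hu Hdual) as (w & Hw & Hw0 & Hw1).
    assert (Hcw : csupp w) by now apply c1_csupp_csupp.
    exists (fun k x => if le_lt_dec k N then u k x + - Bmom d (2 * S N) (u k) * w x else w x).
    split.
    + intros k. destruct (le_lt_dec k N); [| exact Hw].
      apply c1_csupp_plus; [apply Hu | now apply c1_csupp_scal].
    + intros k j Hk Hj. unfold kronecker.
      destruct (le_lt_dec k N) as [HkN | HkN].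
      * rewrite Bmom_plus, Bmom_scal by (auto using c1_csupp_csupp, csupp_scal).
        destruct (le_lt_dec j N) as [HjN | HjN].
        -- rewrite Hw0, Hdual by assumption. unfold kronecker. ring.
        -- assert (j = S N) as -> by lia. rewrite Hw1.
           destruct (Nat.eq_dec k (S N)); [lia | ring].
      * assert (k = S N) as -> by lia.
        destruct (le_lt_dec j N) as [HjN | HjN].
        -- rewrite Hw0 by exact HjN. destruct (Nat.eq_dec (S N) j); [lia | reflexivity].
        -- assert (j = S N) as -> by lia. destruct (Nat.eq_dec (S N) (S N)); [exact Hw1 | lia].
Qed.

(** * Admissible functions of arbitrarily small objective *)

Lemma bsurf_pos d : (1 <= d)%nat -> 0 < bsurf d.
Proof.
  intros Hd. destruct d as [| d]; [lia |]. clear Hd. pose proof PI_RGT_0.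
  assert (Hpair : 0 < bsurf (S d) /\ 0 < bsurf (S (S d))).
  { induction d as [| d [IH1 IH2]]; [simpl; lra |]. split; [exact IH2 |].
    change (bsurf (S (S (S d)))) with (2 * PI / INR (S d) * bsurf (S d)).
    assert (0 < INR (S d)) by (apply lt_0_INR; lia).
    apply Rmult_lt_0_compat; [apply Rdiv_lt_0_compat |]; lra. }
  apply Hpair.
Qed.

Lemma admissible_of_moments d N h : (1 <= N)%nat -> c1_csupp h ->
  Bmom d 0 h = / bsurf d -> (forall j, (1 <= j < N)%nat -> Bmom d (2 * j) h = 0) ->
  Bmom d (2 * N) h <> 0 -> admissible d (2 * N) h.
Proof.
  intros HN (Hder & Hh & Hh') H0 Hmid HN0.
  split; [| split; [| split; [| split; [| split]]]]; auto.
  - intros i _ _. now apply ex_int0inf_csupp, csupp_pow.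
  - now apply ex_int0inf_csupp, csupp_pow, csupp_sq.
  - intros i Hi [j ->]. apply Hmid. lia.
Qed.

Lemma V1_ge0 d h : c1_csupp h -> 0 <= V1 d h.
Proof.
  intros (_ & _ & Hh'). apply int0inf_ge0; [now apply ex_int0inf_csupp, csupp_pow, csupp_sq |].
  intros x Hx. apply Rmult_le_pos; [apply pow_le; lra | apply pow2_ge_0].
Qed.

Lemma V1_plus_scal_le d U V s : c1_csupp U -> c1_csupp V -> -1 <= s <= 1 ->
  V1 d (fun x => U x + s * V x) <= 2 * (V1 d U + V1 d V).
Proof.
  intros HU HV Hs.
  assert (Hcs : forall h, c1_csupp h -> csupp (fun x => x ^ (d - 1) * Derive h x ^ 2))
    by (intros h (_ & _ & Hh'); now apply csupp_pow, csupp_sq).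
  unfold V1. rewrite <- int0inf_plus, <- int0inf_scal
    by (apply ex_int0inf_csupp; auto using csupp_plus).
  apply int0inf_le; [apply ex_int0inf_csupp .. |].
  - apply Hcs, c1_csupp_plus; [exact HU | now apply c1_csupp_scal].
  - apply csupp_scal, csupp_plus; auto.
  - intros x Hx. rewrite Derive_plus, Derive_scal; [| apply HU | apply ex_derive_scal, HV].
    set (a := Derive U x). set (b := Derive V x).
    assert (0 <= x ^ (d - 1)) by (apply pow_le; lra).
    assert ((a + s * b) ^ 2 <= 2 * a ^ 2 + 2 * b ^ 2).
    { assert (0 <= b ^ 2 * (1 - s ^ 2)) by (apply Rmult_le_pos; [apply pow2_ge_0 | nra]).
      pose proof (pow2_ge_0 (a - s * b)). nra. }
    replace (2 * (x ^ (d - 1) * a ^ 2 + x ^ (d - 1) * b ^ 2))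
      with (x ^ (d - 1) * (2 * a ^ 2 + 2 * b ^ 2)) by ring.
    now apply Rmult_le_compat_l.
Qed.

Lemma objective_pos d q G : Nat.Even q -> admissible d q G -> 0 < objective d q G.
Proof.
  intros Hq HG. pose proof (V1_neq0 d q G Hq HG) as HV. destruct HG as (_ & _ & _ & _ & _ & HB).
  unfold objective. rewrite !pow_mult.
  apply Rmult_lt_0_compat; apply pow_lt; destruct (pow2_ge_0 (Bmom d q G)); nra.
Qed.

Lemma admissible_line d N : (1 <= d)%nat -> (1 <= N)%nat -> exists U V,
  c1_csupp U /\ c1_csupp V /\ forall s, s <> 0 ->
  admissible d (2 * N) (fun x => U x + s * V x) /\ Bmom d (2 * N) (fun x => U x + s * V x) = s.
Proof.
  intros Hd HN.
  destruct (moment_dual_basis d N) as [u [Hu Hdual]].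
  pose proof (bsurf_pos d Hd) as Hb.
  set (U := fun x => / bsurf d * u 0%nat x).
  assert (HU : c1_csupp U) by now apply c1_csupp_scal.
  exists U, (u N). split; [exact HU | split; [exact (Hu N) |]]. intros s Hs.
  assert (Hmom : forall j, (j <= N)%nat ->
    Bmom d (2 * j) (fun x => U x + s * u N x) = / bsurf d * kronecker 0 j + s * kronecker N j).
  { intros j Hj. unfold U.
    rewrite Bmom_plus, !Bmom_scal, !Hdual by (auto using c1_csupp_csupp, csupp_scal; lia).
    reflexivity. }
  assert (HBq : Bmom d (2 * N) (fun x => U x + s * u N x) = s).
  { rewrite Hmom by lia. unfold kronecker.
    destruct (Nat.eq_dec 0 N); [lia |]. destruct (Nat.eq_dec N N); [ring | lia]. }
  split; [| exact HBq].
  apply admissible_of_moments; auto.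
  - apply c1_csupp_plus; [exact HU | now apply c1_csupp_scal].
  - change 0%nat with (2 * 0)%nat. rewrite Hmom by lia. unfold kronecker.
    destruct (Nat.eq_dec 0 0); [| lia]. destruct (Nat.eq_dec N 0); [lia | ring].
  - intros j Hj. rewrite Hmom by lia. unfold kronecker.
    destruct (Nat.eq_dec 0 j); [lia |]. destruct (Nat.eq_dec N j); [lia | ring].
  - now rewrite HBq.
Qed.

Lemma pow_le_self s n : 0 <= s <= 1 -> (1 <= n)%nat -> s ^ n <= s.
Proof.
  intros Hs Hn. destruct n as [| n]; [lia |]. simpl.
  assert (s ^ n <= 1) by (rewrite <- (pow1 n); apply pow_incr; lra).
  pose proof (pow_le s n (proj1 Hs)). nra.
Qed.

Lemma objective_arbitrarily_small d q : (1 <= d)%nat -> (2 <= q)%nat -> Nat.Even q ->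
  forall eps, 0 < eps -> exists H, admissible d q H /\ objective d q H < eps.
Proof.
  intros Hd Hq [N ->] eps Heps.
  destruct (admissible_line d N Hd ltac:(lia)) as (U & V & HU & HV & Hline).
  set (K := 2 * (V1 d U + V1 d V)).
  assert (HK : 0 <= K) by (pose proof (V1_ge0 d U HU); pose proof (V1_ge0 d V HV); unfold K; lra).
  set (M := K ^ (2 * (2 * N)) + 1).
  assert (HM : 1 <= M) by (pose proof (pow_le K (2 * (2 * N)) HK); unfold M; lra).
  set (s := Rmin 1 (eps / (2 * M))).
  assert (Hs0 : 0 < s) by (apply Rmin_glb_lt; [lra | apply Rdiv_lt_0_compat; lra]).
  assert (Hs1 : s <= 1) by apply Rmin_l.
  assert (HsM : s * M <= eps / 2).
  { apply Rle_trans with (eps / (2 * M) * M); [apply Rmult_le_compat_r; [lra | apply Rmin_r] |].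
    right. field. lra. }
  destruct (Hline s ltac:(lra)) as [Hadm HBq].
  exists (fun x => U x + s * V x). split; [exact Hadm |].
  unfold objective. rewrite HBq.
  set (E := V1 d (fun x => U x + s * V x)).
  assert (HE : 0 <= E <= K).
  { split; [apply V1_ge0, c1_csupp_plus; [exact HU | now apply c1_csupp_scal] |].
    apply V1_plus_scal_le; auto; lra. }
  assert (HEM : E ^ (2 * (2 * N)) <= M)
    by (pose proof (pow_incr _ _ (2 * (2 * N)) HE); unfold M; lra).
  pose proof (pow_le_self s (2 * (d + 2)) ltac:(lra) ltac:(lia)).
  pose proof (pow_le s (2 * (d + 2)) ltac:(lra)). pose proof (pow_le E (2 * (2 * N)) (proj1 HE)).
  apply Rle_lt_trans with (s * M); [apply Rmult_le_compat |]; lra.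
Qed.

Theorem proposition1 (d q : nat) (hd : (1 <= d)%nat) (hq : (2 <= q)%nat)
  (hqe : Nat.Even q) :
  ~ exists G : R -> R,
      admissible d q G /\
      forall H : R -> R, admissible d q H -> objective d q G <= objective d q H.
Proof.
  intros [G [HG Hmin]].
  destruct (objective_arbitrarily_small d q hd hq hqe (objective d q G))
    as [H [HH Hlt]]; [now apply objective_pos |].
  specialize (Hmin H HH). lra.
Qed.
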